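(* Let $d\ge 1$ and $1\le p<q<\infty$. Then the discrete Morrey space $\ell^p_q(\mathbb{Z}^d)$ satisfies $$C_{\rm NJ}(\ell^p_q)=C_{\rm J}(\ell^p_q)=2\quad\text{and}\quad C_{\rm DW}(\ell^p_q)=4.$$
   Context: Let $\omega:=\mathbb{N}\cup\{0\}$. For $m\in\mathbb{Z}^d$ and $N\in\omega$ let $S_{m,N}:=\{k\in\mathbb{Z}^d:\|k-m\|_\infty\le N\}$, where $\|(k_1,\dots,k_d)\|_\infty=\max_i|k_i|$; its cardinality is $|S_{m,N}|=(2N+1)^d$. For $1\le p\le q<\infty$, the discrete Morrey space $\ell^p_q=\ell^p_q(\mathbb{Z}^d)$ is the Banach space of all functions $x:\mathbb{Z}^d\to\mathbb{R}$ with $$\|x\|_{\ell^p_q}:=\sup_{m\in\mathbb{Z}^d,\,N\in\omega}|S_{m,N}|^{\frac1q-\frac1p}\Big(\sum_{k\in S_{m,N}}|x(k)|^p\Big)^{1/p}<\infty.$$ For a Banach space $X$: the von Neumann–Jordan constant is $C_{\rm NJ}(X):=\sup\Big\{\frac{\|x+y\|_X^2+\|x-y\|_X^2}{2(\|x\|_X^2+\|y\|_X^2)}: x,y\in X\setminus\{0\}\Big\}$; the James constant is $C_{\rm J}(X):=\sup\{\min\{\|x+y\|_X,\|x-y\|_X\}: x,y\in X,\ \|x\|_X=\|y\|_X=1\}$; the Dunkl–Williams constant is $C_{\rm DW}(X):=\sup\Big\{\frac{\|x\|_X+\|y\|_X}{\|x-y\|_X}\Big\|\frac{x}{\|x\|_X}-\frac{y}{\|y\|_X}\Big\|_X: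 x,y\in X,\ x\neq0,\ y\neq0,\ x\neq y\Big\}$. *)

From Stdlib Require Import Reals List ZArith Classical ClassicalEpsilon.
Import ListNotations.
Open Scope R_scope.

Definition Zd (d : nat) : Type := { l : list Z | length l = d }.

Fixpoint pad (d : nat) (l : list Z) : list Z :=
  match d with
  | O => []
  | S d' => hd 0%Z l :: pad d' (tl l)
  end.

Lemma pad_length (d : nat) (l : list Z) : length (pad d l) = d.
Proof. revert l; induction d as [|d IH]; intro l; simpl; [reflexivity | now rewrite IH]. Qed.

Definition to_Zd (d : nat) (l : list Z) : Zd d := exist _ (pad d l) (pad_length d l).

(* Enumeration of the cube S_{m,N} = {k : ||k - m||_inf <= N} (without repetitions). *)
Fixpoint cube (m : list Z) (N : nat) : list (list Z) :=
  match m with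
  | [] => [ [] ]
  | a :: m' =>
      flat_map (fun j => map (cons j) (cube m' N))
               (map (fun i => (a - Z.of_nat N + Z.of_nat i)%Z) (seq 0 (2 * N + 1)))
  end.

(* Real power a^b for a >= 0 (with 0^b = 0, used only for b > 0). *)
Definition rpow (a b : R) : R := if Rlt_dec 0 a then Rpower a b else 0.

Definition morrey_term (d : nat) (p q : R) (x : Zd d -> R) (m : Zd d) (N : nat) : R :=
  Rpower (INR ((2 * N + 1) ^ d)) (1 / q - 1 / p) *
  rpow (fold_right Rplus 0
          (map (fun k => rpow (Rabs (x (to_Zd d k))) p) (cube (proj1_sig m) N)))
       (1 / p).

Definition morrey_set (d : nat) (p q : R) (x : Zd d -> R) (r : R) : Prop :=
  exists (m : Zd d) (N : nat), r = morrey_term d p q x m N.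

Definition in_morrey (d : nat) (p q : R) (x : Zd d -> R) : Prop :=
  exists M, forall (m : Zd d) (N : nat), morrey_term d p q x m N <= M.

Definition Rsup (E : R -> Prop) : R :=
  epsilon (inhabits 0) (fun s => is_lub E s).

Definition morrey_norm (d : nat) (p q : R) (x : Zd d -> R) : R :=
  Rsup (morrey_set d p q x).

Definition fadd {d} (x y : Zd d -> R) : Zd d -> R := fun k => x k + y k.
Definition fsub {d} (x y : Zd d -> R) : Zd d -> R := fun k => x k - y k.
Definition fscal {d} (c : R) (x : Zd d -> R) : Zd d -> R := fun k => c * x k.
Definition fzero {d} : Zd d -> R := fun _ => 0.

(* Sets whose suprema are the von Neumann-Jordan, James and Dunkl-Williams constants. *)
Definition NJ_set (d : nat) (p q : R) (r : R) : Prop :=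
  exists x y : Zd d -> R,
    in_morrey d p q x /\ in_morrey d p q y /\ x <> fzero /\ y <> fzero /\
    r = (morrey_norm d p q (fadd x y) ^ 2 + morrey_norm d p q (fsub x y) ^ 2)
        / (2 * (morrey_norm d p q x ^ 2 + morrey_norm d p q y ^ 2)).

Definition J_set (d : nat) (p q : R) (r : R) : Prop :=
  exists x y : Zd d -> R,
    in_morrey d p q x /\ in_morrey d p q y /\
    morrey_norm d p q x = 1 /\ morrey_norm d p q y = 1 /\
    r = Rmin (morrey_norm d p q (fadd x y)) (morrey_norm d p q (fsub x y)).

Definition DW_set (d : nat) (p q : R) (r : R) : Prop :=
  exists x y : Zd d -> R,
    in_morrey d p q x /\ in_morrey d p q y /\ x <> fzero /\ y <> fzero /\ x <> y /\
    r = (morrey_norm d p q x + morrey_norm d p q y) / morrey_norm d p q (fsub x y) *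
        morrey_norm d p q (fsub (fscal (/ morrey_norm d p q x) x)
                                (fscal (/ morrey_norm d p q y) y)).

From Stdlib Require Import Reals Lra Lia ZArith List FinFun ClassicalEpsilon FunctionalExtensionality.
Import ListNotations.
Open Scope R_scope.

(* The Morrey norm is a lattice norm: a pointwise bound |x| <= a|u| + b|v| gives
   ||x|| <= a||u|| + b||v|| by Minkowski's inequality on each cube.  Hence the
   bounds C_NJ, C_J <= 2 and C_DW <= 4, valid in every normed space, hold here.

   Conversely, since 1/q - 1/p < 0, a cube containing both 0 and a point at
   distance 2L carries weight at most (2L+1)^(1/q-1/p) <= 2^(-1/p) once L is
   large, so the norm of a e_0 + b e_(2L) is exactly max(|a|, |b|): l^p_q
   contains an isometric copy of l^oo_2.  There x = (1,1), y = (1,-1) give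
   C_NJ = C_J = 2, and x = (1,1), y = (1-s,1+s) give Dunkl-Williams quotients
   2(2+s)/(1+s), which tend to 4. *)

Lemma rpow_pos a b : 0 < a -> rpow a b = Rpower a b.
Proof. intro Ha; unfold rpow; destruct (Rlt_dec 0 a); [reflexivity | lra]. Qed.

Lemma rpow_0_l b : rpow 0 b = 0.
Proof. unfold rpow; destruct (Rlt_dec 0 0); [lra | reflexivity]. Qed.

Lemma rpow_gt0 a b : 0 < a -> 0 < rpow a b.
Proof. intro Ha; rewrite rpow_pos by exact Ha; apply exp_pos. Qed.

Lemma rpow_ge0 a b : 0 <= rpow a b.
Proof.
  destruct (Rlt_dec 0 a) as [Ha | Ha]; [now apply Rlt_le, rpow_gt0 |].
  unfold rpow; destruct (Rlt_dec 0 a); [contradiction | lra].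
Qed.

Lemma rpow_eq0 a b : 0 <= a -> rpow a b = 0 -> a = 0.
Proof. intros [Ha | Ha] H; [pose proof (rpow_gt0 a b Ha); lra | auto]. Qed.

Lemma rpow_mult_distr a b c : 0 <= a -> 0 <= b -> rpow (a * b) c = rpow a c * rpow b c.
Proof.
  intros [Ha | <-] [Hb | <-]; rewrite ?Rmult_0_l, ?Rmult_0_r, ?rpow_0_l; try ring.
  rewrite !rpow_pos by nra; now rewrite Rpower_mult_distr.
Qed.

Lemma rpow_inv a c : 0 < a -> rpow (/ a) c = / rpow a c.
Proof.
  intro Ha; rewrite !rpow_pos by (auto using Rinv_0_lt_compat).
  unfold Rpower; rewrite ln_Rinv, <- exp_Ropp by exact Ha; f_equal; ring.
Qed.

Lemma rpow_rpow a b c : 0 <= a -> rpow (rpow a b) c = rpow a (b * c).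
Proof.
  intros [Ha | <-]; [| now rewrite !rpow_0_l].
  rewrite (rpow_pos a b Ha), (rpow_pos a _ Ha), rpow_pos by apply exp_pos.
  apply Rpower_mult.
Qed.

Lemma rpow_1 a : 0 <= a -> rpow a 1 = a.
Proof. intros [Ha | <-]; [rewrite rpow_pos by exact Ha; now apply Rpower_1 | apply rpow_0_l]. Qed.

Lemma rpow_rpow_inv a p : 0 <= a -> 0 < p -> rpow (rpow a p) (1 / p) = a.
Proof.
  intros Ha Hp; rewrite rpow_rpow by exact Ha.
  replace (p * (1 / p)) with 1 by (field; lra); now apply rpow_1.
Qed.

Lemma rpow_inv_rpow a p : 0 <= a -> 0 < p -> rpow (rpow a (1 / p)) p = a.
Proof.
  intros Ha Hp; rewrite rpow_rpow by exact Ha.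
  replace (1 / p * p) with 1 by (field; lra); now apply rpow_1.
Qed.

Lemma rpow_le_compat_l a b c : 0 <= a <= b -> 0 <= c -> rpow a c <= rpow b c.
Proof.
  intros [[Ha | <-] Hab] Hc; [| rewrite rpow_0_l; apply rpow_ge0].
  rewrite !rpow_pos by lra; apply Rle_Rpower_l; lra.
Qed.

Lemma Rpower_le_compat_neg a b c : c <= 0 -> 0 < a <= b -> Rpower b c <= Rpower a c.
Proof.
  intros Hc [Ha [Hab | <-]]; [| lra].
  pose proof (ln_increasing a b Ha Hab).
  destruct (Rle_lt_or_eq_dec c 0 Hc) as [Hc' | ->]; unfold Rpower.
  - left; apply exp_increasing; nra.
  - rewrite !Rmult_0_l; lra.
Qed.

Lemma Rpower_increment_bounds a b p : 0 < a < b -> 1 <= p ->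
  p * Rpower a (p - 1) * (b - a) <= Rpower b p - Rpower a p <= p * Rpower b (p - 1) * (b - a).
Proof.
  intros [Ha Hab] Hp.
  destruct (MVT_cor2 (fun t => Rpower t p) (fun t => p * Rpower t (p - 1)) a b Hab)
    as [c [Hc [Hac Hcb]]].
  { intros c Hc; apply derivable_pt_lim_power; lra. }
  cbv beta in Hc; rewrite Hc.
  assert (Rpower a (p - 1) <= Rpower c (p - 1)) by (apply Rle_Rpower_l; lra).
  assert (Rpower c (p - 1) <= Rpower b (p - 1)) by (apply Rle_Rpower_l; lra).
  split; (apply Rmult_le_compat_r; [lra |]); apply Rmult_le_compat_l; lra.
Qed.

Lemma rpow_tangent_le u m p : 0 <= u -> 0 < m -> 1 <= p ->
  rpow m p + p * Rpower m (p - 1) * (u - m) <= rpow u p.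
Proof.
  intros Hu Hm Hp; rewrite (rpow_pos m) by exact Hm.
  assert (Hmp : Rpower m (p - 1) * m = Rpower m p).
  { rewrite <- (Rpower_1 m) at 2 by exact Hm; rewrite <- Rpower_plus; f_equal; ring. }
  destruct Hu as [Hu | <-].
  - rewrite rpow_pos by exact Hu.
    destruct (Rtotal_order u m) as [Hlt | [-> | Hgt]].
    + pose proof (Rpower_increment_bounds u m p (conj Hu Hlt) Hp); nra.
    + lra.
    + pose proof (Rpower_increment_bounds m u p (conj Hm Hgt) Hp); lra.
  - rewrite rpow_0_l; pose proof (exp_pos (p * ln m)); unfold Rpower in *; nra.
Qed.

Lemma rpow_convex l s t p : 0 <= l <= 1 -> 0 <= s -> 0 <= t -> 1 <= p ->
  rpow (l * s + (1 - l) * t) p <= l * rpow s p + (1 - l) * rpow t p.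
Proof.
  intros Hl Hs Ht Hp.
  assert (Hz : 0 <= l * s + (1 - l) * t) by nra.
  destruct Hz as [Hz | Hz].
  - pose proof (rpow_tangent_le s _ p Hs Hz Hp); pose proof (rpow_tangent_le t _ p Ht Hz Hp).
    set (z := l * s + (1 - l) * t) in *; set (K := p * Rpower z (p - 1)) in *.
    assert (l * (rpow z p + K * (s - z)) + (1 - l) * (rpow z p + K * (t - z)) = rpow z p)
      by (unfold z; ring).
    nra.
  - rewrite <- Hz, rpow_0_l; pose proof (rpow_ge0 s p); pose proof (rpow_ge0 t p); nra.
Qed.

Definition sumL {K : Type} (F : K -> R) (c : list K) : R := fold_right Rplus 0 (map F c).

Lemma sumL_le {K} (F G : K -> R) c :
  (forall k, In k c -> F k <= G k) -> sumL F c <= sumL G c.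
Proof.
  unfold sumL; induction c as [| a c IH]; intro H; simpl; [lra |].
  apply Rplus_le_compat; [apply H; now left | apply IH; intros k Hk; apply H; now right].
Qed.

Lemma sumL_ge0 {K} (F : K -> R) c : (forall k, 0 <= F k) -> 0 <= sumL F c.
Proof.
  intro H; unfold sumL; induction c as [| a c IH]; simpl; [lra |].
  pose proof (H a); lra.
Qed.

Lemma sumL_ext_in {K} (F G : K -> R) c : (forall k, In k c -> F k = G k) -> sumL F c = sumL G c.
Proof. intro H; apply Rle_antisym; apply sumL_le; intros k Hk; rewrite (H k Hk); lra. Qed.

Lemma sumL_lin {K} (F G : K -> R) a b c :
  sumL (fun k => a * F k + b * G k) c = a * sumL F c + b * sumL G c.
Proof. unfold sumL; induction c as [| x c IH]; simpl; [ring | rewrite IH; ring]. Qed.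

Lemma sumL_add {K} (F G : K -> R) c : sumL (fun k => F k + G k) c = sumL F c + sumL G c.
Proof.
  rewrite <- (Rmult_1_l (sumL F c)), <- (Rmult_1_l (sumL G c)), <- sumL_lin.
  apply sumL_ext_in; intros; ring.
Qed.

Lemma sumL_term_le {K} (F : K -> R) c k : (forall x, 0 <= F x) -> In k c -> F k <= sumL F c.
Proof.
  intro H; unfold sumL; induction c as [| a c IH]; intro Hk; [destruct Hk |].
  simpl; destruct Hk as [<- | Hk].
  - pose proof (sumL_ge0 F c H); unfold sumL in *; lra.
  - pose proof (IH Hk); pose proof (H a); lra.
Qed.

Lemma sumL_indicator {K} (eq_dec : forall x y : K, {x = y} + {x <> y}) a v c : NoDup c ->
  sumL (fun k => if eq_dec k a then v else 0) c = if in_dec eq_dec a c then v else 0.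
Proof.
  unfold sumL; induction 1 as [| k c Hk Hc IH]; simpl; [reflexivity |].
  rewrite IH; destruct (eq_dec k a) as [-> | Hka].
  - destruct (eq_dec a a); [| congruence].
    destruct (in_dec eq_dec a c); [contradiction | ring].
  - destruct (eq_dec a k); [congruence |].
    destruct (in_dec eq_dec a c); ring.
Qed.

Definition lp_norm_on {K : Type} (p : R) (f : K -> R) (c : list K) : R :=
  rpow (sumL (fun k => rpow (f k) p) c) (1 / p).

Section Minkowski.
Variables (K : Type) (p : R) (c : list K).
Hypothesis Hp : 1 <= p.

Lemma lp_norm_on_ge0 f : 0 <= lp_norm_on p f c.
Proof. apply rpow_ge0. Qed.

Lemma sumL_rpow_ge0 f : 0 <= sumL (fun k => rpow (f k) p) c.
Proof. apply sumL_ge0; intro; apply rpow_ge0. Qed.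

Lemma lp_norm_on_le f g : (forall k, 0 <= f k <= g k) -> lp_norm_on p f c <= lp_norm_on p g c.
Proof.
  intro H; apply rpow_le_compat_l; [| apply Rlt_le, Rdiv_lt_0_compat; lra].
  split; [apply sumL_rpow_ge0 |].
  apply sumL_le; intros k _; apply rpow_le_compat_l; [apply H | lra].
Qed.

Lemma lp_norm_on_scal a f : 0 <= a -> (forall k, 0 <= f k) ->
  lp_norm_on p (fun k => a * f k) c = a * lp_norm_on p f c.
Proof.
  intros Ha Hf; unfold lp_norm_on.
  rewrite (sumL_ext_in _ (fun k => rpow a p * rpow (f k) p + 0 * rpow (f k) p))
    by (intros k _; rewrite rpow_mult_distr by auto; ring).
  rewrite sumL_lin, Rmult_0_l, Rplus_0_r, rpow_mult_distr
    by (apply rpow_ge0 || apply sumL_rpow_ge0).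
  now rewrite rpow_rpow_inv by lra.
Qed.

Lemma lp_norm_on_eq0 f : (forall k, 0 <= f k) -> lp_norm_on p f c = 0 ->
  forall k, In k c -> f k = 0.
Proof.
  intros Hf H0 k Hk; apply (rpow_eq0 _ p (Hf k)).
  apply rpow_eq0 in H0; [| apply sumL_rpow_ge0].
  pose proof (sumL_term_le (fun k => rpow (f k) p) c k (fun x => rpow_ge0 _ _) Hk).
  pose proof (rpow_ge0 (f k) p); simpl in *; lra.
Qed.

Lemma minkowski_zero_l f g : (forall k, 0 <= f k) -> lp_norm_on p f c = 0 ->
  lp_norm_on p (fun k => f k + g k) c <= lp_norm_on p f c + lp_norm_on p g c.
Proof.
  intros Hf H0; rewrite H0, Rplus_0_l; unfold lp_norm_on.
  rewrite (sumL_ext_in _ (fun k => rpow (g k) p)); [lra |].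
  intros k Hk; now rewrite (lp_norm_on_eq0 f Hf H0 k Hk), Rplus_0_l.
Qed.

(* Normalizing by [A] and [B], [(f + g) / (A + B)] is a convex combination of
   [f / A] and [g / B], whose [p]-th power sums are both [1]. *)
Lemma minkowski_pos f g : (forall k, 0 <= f k) -> (forall k, 0 <= g k) ->
  0 < lp_norm_on p f c -> 0 < lp_norm_on p g c ->
  lp_norm_on p (fun k => f k + g k) c <= lp_norm_on p f c + lp_norm_on p g c.
Proof.
  intros Hf Hg HA HB.
  set (A := lp_norm_on p f c) in *; set (B := lp_norm_on p g c) in *.
  set (SA := sumL (fun k => rpow (f k) p) c); set (SB := sumL (fun k => rpow (g k) p) c).
  assert (EA : rpow A p = SA) by (apply rpow_inv_rpow; [apply sumL_rpow_ge0 | lra]).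
  assert (EB : rpow B p = SB) by (apply rpow_inv_rpow; [apply sumL_rpow_ge0 | lra]).
  assert (HSA : 0 < SA) by (rewrite <- EA; now apply rpow_gt0).
  assert (HSB : 0 < SB) by (rewrite <- EB; now apply rpow_gt0).
  set (l := A / (A + B)); set (C := rpow (A + B) p).
  assert (Hl : 0 <= l <= 1).
  { unfold l; split; [apply Rle_mult_inv_pos; lra |].
    apply (Rmult_le_reg_r (A + B)); [lra |]; unfold Rdiv; rewrite Rmult_assoc, Rinv_l; lra. }
  assert (Hnormal : forall h S H, 0 <= h -> 0 < H -> rpow H p = S ->
            rpow (h / H) p = rpow h p / S).
  { intros h S H Hh HH HS; unfold Rdiv.
    rewrite rpow_mult_distr, rpow_inv, HS by (auto; apply Rlt_le, Rinv_0_lt_compat, HH).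
    reflexivity. }
  assert (Hpt : forall k, rpow (f k + g k) p
                  <= (C * l / SA) * rpow (f k) p + (C * (1 - l) / SB) * rpow (g k) p).
  { intro k.
    assert (Hfk : 0 <= f k / A) by (apply Rle_mult_inv_pos; auto).
    assert (Hgk : 0 <= g k / B) by (apply Rle_mult_inv_pos; auto).
    replace (f k + g k) with ((A + B) * (l * (f k / A) + (1 - l) * (g k / B)))
      by (unfold l; field; lra).
    rewrite rpow_mult_distr by nra.
    pose proof (rpow_convex l _ _ p Hl Hfk Hgk Hp) as Hconv.
    rewrite (Hnormal (f k) SA A), (Hnormal (g k) SB B) in Hconv by auto.
    apply Rle_trans with (C * (l * (rpow (f k) p / SA) + (1 - l) * (rpow (g k) p / SB))).
    - apply Rmult_le_compat_l; [apply rpow_ge0 | exact Hconv].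
    - right; field; lra. }
  pose proof (sumL_le _ _ c (fun k _ => Hpt k)) as Hsum.
  rewrite sumL_lin in Hsum; fold SA SB in Hsum.
  replace (C * l / SA * SA + C * (1 - l) / SB * SB) with C in Hsum by (field; lra).
  unfold lp_norm_on at 1; rewrite <- (rpow_rpow_inv (A + B) p) by lra.
  apply rpow_le_compat_l; [split; [apply sumL_rpow_ge0 | exact Hsum] |].
  apply Rlt_le, Rdiv_lt_0_compat; lra.
Qed.

Lemma minkowski f g : (forall k, 0 <= f k) -> (forall k, 0 <= g k) ->
  lp_norm_on p (fun k => f k + g k) c <= lp_norm_on p f c + lp_norm_on p g c.
Proof.
  intros Hf Hg.
  destruct (lp_norm_on_ge0 f) as [HA | HA]; [| now apply minkowski_zero_l].
  destruct (lp_norm_on_ge0 g) as [HB | HB]; [now apply minkowski_pos |].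
  rewrite Rplus_comm; unfold lp_norm_on at 1.
  rewrite (sumL_ext_in _ (fun k => rpow (g k + f k) p)) by (intros; now rewrite Rplus_comm).
  now apply minkowski_zero_l.
Qed.

End Minkowski.

Definition weight (d : nat) (p q : R) (N : nat) : R :=
  Rpower (INR ((2 * N + 1) ^ d)) (1 / q - 1 / p).

Lemma morrey_term_lp d p q x m N : morrey_term d p q x m N =
  weight d p q N * lp_norm_on p (fun k => Rabs (x (to_Zd d k))) (cube (proj1_sig m) N).
Proof. reflexivity. Qed.

Lemma weight_pos d p q N : 0 < weight d p q N.
Proof. apply exp_pos. Qed.

Lemma morrey_term_ge0 d p q x m N : 0 <= morrey_term d p q x m N.
Proof.
  rewrite morrey_term_lp; apply Rmult_le_pos; [apply Rlt_le, weight_pos | apply lp_norm_on_ge0].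
Qed.

Lemma morrey_term_le_comb d p q x u v a b m N : 1 <= p -> 0 <= a -> 0 <= b ->
  (forall k, Rabs (x k) <= a * Rabs (u k) + b * Rabs (v k)) ->
  morrey_term d p q x m N <= a * morrey_term d p q u m N + b * morrey_term d p q v m N.
Proof.
  intros Hp Ha Hb H; rewrite !morrey_term_lp.
  set (c := cube (proj1_sig m) N).
  set (U := fun k => Rabs (u (to_Zd d k))); set (V := fun k => Rabs (v (to_Zd d k))).
  assert (HU : forall k, 0 <= U k) by (intro; apply Rabs_pos).
  assert (HV : forall k, 0 <= V k) by (intro; apply Rabs_pos).
  apply Rle_trans with (weight d p q N * lp_norm_on p (fun k => a * U k + b * V k) c).
  - apply Rmult_le_compat_l; [apply Rlt_le, weight_pos |].
    apply lp_norm_on_le; [exact Hp | intro k; split; [apply Rabs_pos | apply H]].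
  - assert (HaU : forall k, 0 <= a * U k) by (intro; apply Rmult_le_pos; auto).
    assert (HbV : forall k, 0 <= b * V k) by (intro; apply Rmult_le_pos; auto).
    pose proof (minkowski _ p c Hp _ _ HaU HbV) as Hmink.
    rewrite (lp_norm_on_scal _ p c Hp a U), (lp_norm_on_scal _ p c Hp b V) in Hmink by auto.
    pose proof (weight_pos d p q N); nra.
Qed.

Lemma cube_0 l : cube l 0 = [l].
Proof. induction l as [| a l IH]; simpl; [reflexivity | rewrite IH; simpl; do 2 f_equal; lia]. Qed.

Lemma pad_id d l : length l = d -> pad d l = l.
Proof.
  revert l; induction d as [| d IH]; intros [| a l] H; simpl in *; try discriminate; auto.
  f_equal; apply IH; lia.
Qed.

Lemma to_Zd_proj d (k : Zd d) : to_Zd d (proj1_sig k) = k.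
Proof.
  destruct k as [l Hl]; unfold to_Zd; simpl.
  apply eq_exist_uncurried; exists (pad_id d l Hl); apply Eqdep_dec.UIP_dec, Nat.eq_dec.
Qed.

Lemma morrey_term_0 d p q x k : 0 < p -> morrey_term d p q x k 0 = Rabs (x k).
Proof.
  intro Hp; unfold morrey_term; rewrite cube_0, Nat.pow_1_l; simpl.
  unfold Rpower at 1; rewrite ln_1, Rmult_0_r, exp_0, Rmult_1_l, Rplus_0_r, to_Zd_proj.
  apply rpow_rpow_inv; [apply Rabs_pos | exact Hp].
Qed.

Section MorreyNorm.
Variables (d : nat) (p q : R).
Hypothesis Hp : 1 <= p.

Lemma morrey_norm_lub x : in_morrey d p q x -> is_lub (morrey_set d p q x) (morrey_norm d p q x).
Proof.
  intros [M HM]; unfold morrey_norm, Rsup; apply epsilon_spec.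
  destruct (completeness (morrey_set d p q x)) as [s Hs].
  - exists M; intros r (m & N & ->); apply HM.
  - exists (morrey_term d p q x (to_Zd d []) 0), (to_Zd d []), 0%nat; reflexivity.
  - exists s; exact Hs.
Qed.

Lemma morrey_term_le_norm x m N :
  in_morrey d p q x -> morrey_term d p q x m N <= morrey_norm d p q x.
Proof. intro Hx; apply (proj1 (morrey_norm_lub x Hx)); exists m, N; reflexivity. Qed.

Lemma morrey_norm_le x M : (forall m N, morrey_term d p q x m N <= M) -> morrey_norm d p q x <= M.
Proof.
  intro H; apply (proj2 (morrey_norm_lub x (ex_intro _ M H))).
  intros r (m & N & ->); apply H.
Qed.

Lemma morrey_norm_ge0 x : in_morrey d p q x -> 0 <= morrey_norm d p q x.
Proof.
  intro Hx; eapply Rle_trans; [apply morrey_term_ge0 |].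
  apply (morrey_term_le_norm x (to_Zd d []) 0 Hx).
Qed.

Lemma abs_le_morrey_norm x k : in_morrey d p q x -> Rabs (x k) <= morrey_norm d p q x.
Proof. intro Hx; rewrite <- (morrey_term_0 d p q x k) by lra; now apply morrey_term_le_norm. Qed.

Lemma morrey_norm_gt0 x : in_morrey d p q x -> x <> fzero -> 0 < morrey_norm d p q x.
Proof.
  intros Hx Hx0; destruct (classic (exists k, x k <> 0)) as [[k Hk] | Hn].
  - eapply Rlt_le_trans; [apply Rabs_pos_lt, Hk | now apply abs_le_morrey_norm].
  - exfalso; apply Hx0, functional_extensionality; intro k.
    apply NNPP; intro Hk; apply Hn; now exists k.
Qed.

Lemma morrey_norm_le_comb x u v a b : 0 <= a -> 0 <= b ->
  in_morrey d p q u -> in_morrey d p q v ->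
  (forall k, Rabs (x k) <= a * Rabs (u k) + b * Rabs (v k)) ->
  in_morrey d p q x /\ morrey_norm d p q x <= a * morrey_norm d p q u + b * morrey_norm d p q v.
Proof.
  intros Ha Hb Hu Hv H.
  assert (Hx : forall m N, morrey_term d p q x m N
                 <= a * morrey_norm d p q u + b * morrey_norm d p q v).
  { intros m N; eapply Rle_trans; [now apply (morrey_term_le_comb d p q x u v a b) |].
    pose proof (morrey_term_le_norm u m N Hu); pose proof (morrey_term_le_norm v m N Hv); nra. }
  split; [eexists; exact Hx | now apply morrey_norm_le].
Qed.

Lemma morrey_norm_abs_ext x y : (forall k, Rabs (x k) = Rabs (y k)) ->
  morrey_norm d p q x = morrey_norm d p q y.
Proof.
  intro H.
  assert (Hterm : morrey_term d p q x = morrey_term d p q y).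
  { apply functional_extensionality; intro m; apply functional_extensionality; intro N.
    unfold morrey_term; do 4 f_equal; apply functional_extensionality; intro k; now rewrite H. }
  unfold morrey_norm, morrey_set; now rewrite Hterm.
Qed.

End MorreyNorm.

Section UpperBounds.
Variables (d : nat) (p q : R).
Hypothesis Hp : 1 <= p.

Lemma morrey_norm_fadd_le x y : in_morrey d p q x -> in_morrey d p q y ->
  in_morrey d p q (fadd x y) /\
  morrey_norm d p q (fadd x y) <= morrey_norm d p q x + morrey_norm d p q y.
Proof.
  intros Hx Hy; rewrite <- (Rmult_1_l (morrey_norm d p q x)), <- (Rmult_1_l (morrey_norm d p q y)).
  apply morrey_norm_le_comb; try lra; auto.
  intro k; rewrite !Rmult_1_l; apply Rabs_triang.
Qed.

Lemma morrey_norm_fsub_le x y : in_morrey d p q x -> in_morrey d p q y ->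
  in_morrey d p q (fsub x y) /\
  morrey_norm d p q (fsub x y) <= morrey_norm d p q x + morrey_norm d p q y.
Proof.
  intros Hx Hy; rewrite <- (Rmult_1_l (morrey_norm d p q x)), <- (Rmult_1_l (morrey_norm d p q y)).
  apply morrey_norm_le_comb; try lra; auto.
  intro k; rewrite !Rmult_1_l, <- (Rabs_Ropp (y k)); apply Rabs_triang.
Qed.

Lemma NJ_set_le_2 r : NJ_set d p q r -> r <= 2.
Proof.
  intros (x & y & Hx & Hy & Hx0 & Hy0 & ->).
  pose proof (morrey_norm_gt0 d p q Hp x Hx Hx0); pose proof (morrey_norm_gt0 d p q Hp y Hy Hy0).
  destruct (morrey_norm_fadd_le x y Hx Hy) as [Ha1 Ha2].
  destruct (morrey_norm_fsub_le x y Hx Hy) as [Hb1 Hb2].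
  pose proof (morrey_norm_ge0 d p q _ Ha1); pose proof (morrey_norm_ge0 d p q _ Hb1).
  set (X := morrey_norm d p q x) in *; set (Y := morrey_norm d p q y) in *.
  set (A := morrey_norm d p q (fadd x y)) in *; set (B := morrey_norm d p q (fsub x y)) in *.
  assert (A * A <= (X + Y) * (X + Y)) by (apply Rmult_le_compat; lra).
  assert (B * B <= (X + Y) * (X + Y)) by (apply Rmult_le_compat; lra).
  apply Rmult_le_reg_r with (2 * (X ^ 2 + Y ^ 2)); [nra |].
  unfold Rdiv; rewrite Rmult_assoc, Rinv_l by nra.
  pose proof (Rle_0_sqr (X - Y)); unfold Rsqr in *; simpl; nra.
Qed.

Lemma J_set_le_2 r : J_set d p q r -> r <= 2.
Proof.
  intros (x & y & Hx & Hy & Hx1 & Hy1 & ->).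
  destruct (morrey_norm_fadd_le x y Hx Hy) as [_ H]; eapply Rle_trans; [apply Rmin_l | lra].
Qed.

Lemma dw_ratio_le_4 X Y D E : 0 < Y <= X -> 0 < D -> X <= D + Y ->
  E <= / X * D + (/ Y - / X) * Y -> (X + Y) / D * E <= 4.
Proof.
  intros HXY HD HXD HE.
  replace (/ X * D + (/ Y - / X) * Y) with ((D + X - Y) / X) in HE by (field; lra).
  apply Rle_trans with ((X + Y) / D * ((D + X - Y) / X)).
  - apply Rmult_le_compat_l; [apply Rle_mult_inv_pos |]; lra.
  - replace ((X + Y) / D * ((D + X - Y) / X)) with ((X + Y) * (D + X - Y) / (D * X))
      by (field; lra).
    apply Rmult_le_reg_r with (D * X); [nra |].
    unfold Rdiv; rewrite Rmult_assoc, Rinv_l by nra; nra.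
Qed.

Lemma DW_quotient_le_4_ordered x y : in_morrey d p q x -> in_morrey d p q y ->
  y <> fzero -> x <> y -> morrey_norm d p q y <= morrey_norm d p q x ->
  (morrey_norm d p q x + morrey_norm d p q y) / morrey_norm d p q (fsub x y) *
  morrey_norm d p q (fsub (fscal (/ morrey_norm d p q x) x) (fscal (/ morrey_norm d p q y) y)) <= 4.
Proof.
  intros Hx Hy Hy0 Hxy HYX.
  pose proof (morrey_norm_gt0 d p q Hp y Hy Hy0) as HY.
  destruct (morrey_norm_fsub_le x y Hx Hy) as [Hxy1 _].
  assert (Hxy0 : fsub x y <> fzero).
  { intro H0; apply Hxy, functional_extensionality; intro k.
    pose proof (equal_f H0 k) as Hk; unfold fsub, fzero in Hk; lra. }
  pose proof (morrey_norm_gt0 d p q Hp _ Hxy1 Hxy0) as HD.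
  set (X := morrey_norm d p q x) in *; set (Y := morrey_norm d p q y) in *.
  set (D := morrey_norm d p q (fsub x y)) in *.
  assert (HinvXY : / X <= / Y) by (apply Rinv_le_contravar; lra).
  apply dw_ratio_le_4; try lra.
  - assert (Hpt : forall k, Rabs (x k) <= 1 * Rabs (fsub x y k) + 1 * Rabs (y k)).
    { intro k; unfold fsub; rewrite !Rmult_1_l.
      replace (x k) with ((x k - y k) + y k) at 1 by ring; apply Rabs_triang. }
    destruct (morrey_norm_le_comb d p q Hp x _ _ 1 1 ltac:(lra) ltac:(lra) Hxy1 Hy Hpt) as [_ H0].
    fold X Y D in H0; lra.
  - apply morrey_norm_le_comb; auto; [left; apply Rinv_0_lt_compat; lra | lra |].
    intro k; unfold fsub, fscal.
    replace (/ X * x k - / Y * y k) with (/ X * (x k - y k) + - (/ Y - / X) * y k) by ring.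
    eapply Rle_trans; [apply Rabs_triang |].
    rewrite !Rabs_mult, Rabs_Ropp, (Rabs_right (/ X)), (Rabs_right (/ Y - / X))
      by (try apply Rle_ge, Rlt_le, Rinv_0_lt_compat; lra).
    lra.
Qed.

Lemma DW_set_le_4 r : DW_set d p q r -> r <= 4.
Proof.
  intros (x & y & Hx & Hy & Hx0 & Hy0 & Hxy & ->).
  destruct (Rle_or_lt (morrey_norm d p q y) (morrey_norm d p q x)) as [HYX | HXY].
  - now apply DW_quotient_le_4_ordered.
  - rewrite Rplus_comm, (morrey_norm_abs_ext d p q (fsub x y) (fsub y x))
      by (intro; apply Rabs_minus_sym).
    rewrite (morrey_norm_abs_ext d p q (fsub (fscal _ x) (fscal _ y))
                                       (fsub (fscal _ y) (fscal _ x)))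
      by (intro; apply Rabs_minus_sym).
    apply DW_quotient_le_4_ordered; auto; lra.
Qed.

End UpperBounds.

Lemma in_cube m N k : In k (cube m N) ->
  length k = length m /\ Forall2 (fun a b => (b - Z.of_nat N <= a <= b + Z.of_nat N)%Z) k m.
Proof.
  revert k; induction m as [| c m IH]; intros k Hk; simpl in Hk.
  - destruct Hk as [<- | []]; split; [reflexivity | constructor].
  - apply in_flat_map in Hk as (j & Hj & Hk); apply in_map_iff in Hk as (k' & <- & Hk').
    apply in_map_iff in Hj as (i & <- & Hi); apply in_seq in Hi.
    destruct (IH k' Hk') as [Hlen Hcoord]; split; [simpl; lia | constructor; [lia | exact Hcoord]].
Qed.

Lemma NoDup_flat_map_disjoint {A B} (g : A -> list B) l : NoDup l -> (forall j, NoDup (g j)) ->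
  (forall j1 j2 y, In y (g j1) -> In y (g j2) -> j1 = j2) -> NoDup (flat_map g l).
Proof.
  intros Hl Hg Hdisj; induction Hl as [| a l Ha Hl IH]; simpl; [constructor |].
  apply NoDup_app; auto.
  intros y Hy Hy'; apply in_flat_map in Hy' as (j & Hj & Hyj).
  now rewrite (Hdisj _ _ _ Hy Hyj) in Ha.
Qed.

Lemma cube_NoDup m N : NoDup (cube m N).
Proof.
  induction m as [| c m IH]; simpl; [repeat constructor; intros [] |].
  apply NoDup_flat_map_disjoint.
  - apply Injective_map_NoDup; [intros i j H; lia | apply seq_NoDup].
  - intro j; apply Injective_map_NoDup; [intros k k' H; now injection H | exact IH].
  - intros j1 j2 y H1 H2; apply in_map_iff in H1 as (k1 & <- & _), H2 as (k2 & E & _).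
    now injection E.
Qed.

Lemma morrey_exponent_neg p q : 0 < p < q -> 1 / q - 1 / p < 0.
Proof.
  intros Hpq; unfold Rdiv; rewrite !Rmult_1_l.
  assert (/ q < / p) by (apply Rinv_lt_contravar; nra); lra.
Qed.

Lemma weight_le_1 d p q N : 0 < p < q -> weight d p q N <= 1.
Proof.
  intro Hpq; apply Rle_trans with (Rpower 1 (1 / q - 1 / p)).
  - apply Rpower_le_compat_neg; [now apply Rlt_le, morrey_exponent_neg |].
    split; [lra |]; apply (le_INR 1).
    pose proof (Nat.pow_le_mono_l 1 (2 * N + 1) d); rewrite Nat.pow_1_l in *; lia.
  - unfold Rpower; rewrite ln_1, Rmult_0_r, exp_0; lra.
Qed.

Lemma weight_le_weight_1 d p q L N : 0 < p < q -> (1 <= d)%nat -> (L <= N)%nat ->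
  weight d p q N <= weight 1 p q L.
Proof.
  intros Hpq Hd HLN; apply Rpower_le_compat_neg; [now apply Rlt_le, morrey_exponent_neg |].
  split; [apply lt_0_INR; simpl; lia |]; apply le_INR.
  pose proof (Nat.pow_le_mono_r (2 * N + 1) 1 d ltac:(lia) Hd); simpl in *; lia.
Qed.

(* [L] is chosen with [2L+1 > exp (ln 2 / p / (1/p - 1/q))]. *)
Lemma exists_separation_radius p q : 1 <= p -> p < q ->
  exists L, (1 <= L)%nat /\ weight 1 p q L * Rpower 2 (1 / p) <= 1.
Proof.
  intros Hp Hpq; pose proof (morrey_exponent_neg p q ltac:(lra)) as He.
  set (e := 1 / q - 1 / p) in *; set (K := (ln 2 / p) / - e).
  destruct (archimed (exp K)) as [HK _]; pose proof (exp_pos K).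
  assert (Hz : (0 <= up (exp K))%Z) by (apply le_IZR; lra).
  exists (S (Z.to_nat (up (exp K)))); split; [lia |].
  set (X := INR ((2 * S (Z.to_nat (up (exp K))) + 1) ^ 1)).
  assert (HX : exp K < X).
  { apply Rlt_le_trans with (IZR (up (exp K))); [exact HK |].
    rewrite <- (Z2Nat.id _ Hz) at 1; rewrite <- INR_IZR_INZ.
    apply le_INR; rewrite Nat.pow_1_r; lia. }
  assert (HlX : K < ln X) by (rewrite <- (ln_exp K); apply ln_increasing; auto).
  unfold weight, Rpower; fold e X; rewrite <- exp_plus.
  assert (e * K = - (1 / p * ln 2)) by (unfold K; field; lra).
  assert (e * ln X < e * K) by (apply Rmult_lt_gt_compat_neg_l; assumption).
  apply Rle_trans with (exp 0); [left; apply exp_increasing; lra | rewrite exp_0; lra].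
Qed.

Lemma Rmax_abs_l a b : - a <= b <= a -> Rmax (Rabs a) (Rabs b) = a.
Proof. intro H; rewrite (Rabs_right a) by lra; apply Rmax_left, Rabs_le; lra. Qed.

Lemma Rmax_abs_r a b : - b <= a <= b -> Rmax (Rabs a) (Rabs b) = b.
Proof. intro H; rewrite (Rabs_right b) by lra; apply Rmax_right, Rabs_le; lra. Qed.

Section TwoPoints.
Variables (d' : nat) (p q : R) (L : nat).
Hypothesis Hp : 1 <= p.
Hypothesis Hpq : p < q.
Hypothesis HL : (1 <= L)%nat.
Hypothesis Hsep : weight 1 p q L * Rpower 2 (1 / p) <= 1.

Let d := S d'.

Definition origin : list Z := repeat 0%Z d.
Definition far_point : list Z := (2 * Z.of_nat L)%Z :: repeat 0%Z d'.

Definition two_point_on (a b : R) (k : list Z) : R :=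
  if list_eq_dec Z.eq_dec k origin then a
  else if list_eq_dec Z.eq_dec k far_point then b else 0.

Definition two_point (a b : R) : Zd d -> R := fun z => two_point_on a b (proj1_sig z).

Lemma origin_neq_far_point : origin <> far_point.
Proof.
  intro H; apply (f_equal (hd 0%Z)) in H; unfold origin, far_point, d in H.
  cbn [hd repeat] in H; lia.
Qed.

Lemma two_point_origin a b : two_point a b (to_Zd d origin) = a.
Proof.
  unfold two_point, two_point_on, to_Zd; cbn [proj1_sig].
  rewrite pad_id by apply repeat_length.
  now destruct (list_eq_dec Z.eq_dec origin origin).
Qed.

Lemma two_point_far_point a b : two_point a b (to_Zd d far_point) = b.
Proof.
  unfold two_point, two_point_on, to_Zd; cbn [proj1_sig].
  rewrite pad_id by (simpl; now rewrite repeat_length).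
  destruct (list_eq_dec Z.eq_dec far_point origin) as [E | _];
    [now contradiction origin_neq_far_point |].
  now destruct (list_eq_dec Z.eq_dec far_point far_point).
Qed.

Lemma far_point_in_cube_le m N : In origin (cube m N) -> In far_point (cube m N) -> (L <= N)%nat.
Proof.
  intros Ho Hf; apply in_cube in Ho as [Hlen Ho]; apply in_cube in Hf as [_ Hf].
  unfold origin, d in Ho; unfold far_point in Hf; cbn [repeat] in Ho.
  destruct m as [| c m]; [inversion Ho |].
  apply Forall2_cons_iff in Ho as [Ho _]; apply Forall2_cons_iff in Hf as [Hf _]; lia.
Qed.

Lemma sumL_two_point a b c : NoDup c ->
  sumL (fun k => rpow (Rabs (two_point_on a b k)) p) c =
  (if in_dec (list_eq_dec Z.eq_dec) origin c then rpow (Rabs a) p else 0) +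
  (if in_dec (list_eq_dec Z.eq_dec) far_point c then rpow (Rabs b) p else 0).
Proof.
  intro Hc; rewrite <- !sumL_indicator by exact Hc; rewrite <- sumL_add.
  apply sumL_ext_in; intros k _; unfold two_point_on.
  destruct (list_eq_dec Z.eq_dec k origin) as [Ho | Ho],
    (list_eq_dec Z.eq_dec k far_point) as [Hf | Hf];
    [now contradiction origin_neq_far_point; rewrite <- Ho, <- Hf | ring | ring |].
  rewrite Rabs_R0, rpow_0_l; ring.
Qed.

Lemma morrey_term_two_point_le a b m N :
  morrey_term d p q (two_point a b) m N <= Rmax (Rabs a) (Rabs b).
Proof.
  set (M := Rmax (Rabs a) (Rabs b)).
  assert (Ha : Rabs a <= M) by apply Rmax_l; assert (Hb : Rabs b <= M) by apply Rmax_r.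
  pose proof (Rabs_pos a) as Ha0; pose proof (Rabs_pos b) as Hb0.
  assert (Hp' : 0 < p) by lra.
  set (c := cube (proj1_sig m) N).
  assert (Hterm : morrey_term d p q (two_point a b) m N = weight d p q N *
    rpow ((if in_dec (list_eq_dec Z.eq_dec) origin c then rpow (Rabs a) p else 0) +
          (if in_dec (list_eq_dec Z.eq_dec) far_point c then rpow (Rabs b) p else 0)) (1 / p)).
  { rewrite morrey_term_lp; unfold lp_norm_on; rewrite <- sumL_two_point by apply cube_NoDup.
    do 2 f_equal; apply sumL_ext_in; intros k Hk; unfold two_point, to_Zd; cbn [proj1_sig].
    rewrite pad_id; [reflexivity |].
    apply in_cube in Hk as [-> _]; destruct m as [lm Hlm]; exact Hlm. }
  rewrite Hterm; pose proof (weight_pos d p q N); pose proof (weight_le_1 d p q N ltac:(lra)).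
  destruct (in_dec _ origin c) as [Ho | Ho], (in_dec _ far_point c) as [Hf | Hf];
    rewrite ?Rplus_0_l, ?Rplus_0_r, ?rpow_rpow_inv by assumption.
  - apply Rle_trans with (weight 1 p q L * (Rpower 2 (1 / p) * M)).
    + apply Rmult_le_compat; try lra; [apply rpow_ge0 | |].
      * apply weight_le_weight_1; [lra | unfold d; lia | exact (far_point_in_cube_le _ _ Ho Hf)].
      * rewrite <- (rpow_rpow_inv M p), <- (rpow_pos 2) by lra.
        rewrite <- rpow_mult_distr by (lra || apply rpow_ge0).
        apply rpow_le_compat_l; [split; [apply Rplus_le_le_0_compat; apply rpow_ge0 |] |].
        -- pose proof (rpow_le_compat_l _ _ p (conj Ha0 Ha) ltac:(lra)).
           pose proof (rpow_le_compat_l _ _ p (conj Hb0 Hb) ltac:(lra)); lra.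
        -- apply Rlt_le, Rdiv_lt_0_compat; lra.
    + rewrite <- Rmult_assoc; pose proof (Rabs_pos a); nra.
  - nra.
  - nra.
  - rewrite rpow_0_l; nra.
Qed.

Lemma in_morrey_two_point a b : in_morrey d p q (two_point a b).
Proof. exists (Rmax (Rabs a) (Rabs b)); apply morrey_term_two_point_le. Qed.

Lemma morrey_norm_two_point a b : morrey_norm d p q (two_point a b) = Rmax (Rabs a) (Rabs b).
Proof.
  apply Rle_antisym; [apply morrey_norm_le, morrey_term_two_point_le |].
  apply Rmax_lub.
  - rewrite <- (two_point_origin a b) at 1.
    apply abs_le_morrey_norm, in_morrey_two_point; lra.
  - rewrite <- (two_point_far_point a b) at 1.
    apply abs_le_morrey_norm, in_morrey_two_point; lra.
Qed.

Lemma two_point_map2 (f : R -> R -> R) a b a' b' : f 0 0 = 0 ->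
  (fun z => f (two_point a b z) (two_point a' b' z)) = two_point (f a a') (f b b').
Proof.
  intro Hf; apply functional_extensionality; intro z; unfold two_point, two_point_on.
  now destruct (list_eq_dec Z.eq_dec (proj1_sig z) origin),
    (list_eq_dec Z.eq_dec (proj1_sig z) far_point).
Qed.

Lemma fadd_two_point a b a' b' :
  fadd (two_point a b) (two_point a' b') = two_point (a + a') (b + b').
Proof. apply (two_point_map2 Rplus); ring. Qed.

Lemma fsub_two_point a b a' b' :
  fsub (two_point a b) (two_point a' b') = two_point (a - a') (b - b').
Proof. apply (two_point_map2 Rminus); ring. Qed.

Lemma fscal_two_point c a b : fscal c (two_point a b) = two_point (c * a) (c * b).
Proof. apply (two_point_map2 (fun u _ => c * u) a b a b); ring. Qed.

Lemma two_point_inj_l a b a' b' : two_point a b = two_point a' b' -> a = a'.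
Proof. intro E; now rewrite <- (two_point_origin a b), <- (two_point_origin a' b'), E. Qed.

Lemma two_point_neq0 a b : a <> 0 -> two_point a b <> fzero.
Proof.
  intros Ha E; apply Ha; rewrite <- (two_point_origin a b), E; reflexivity.
Qed.

Lemma NJ_set_two_point : NJ_set d p q 2.
Proof.
  exists (two_point 1 1), (two_point 1 (-1)).
  repeat split; try apply in_morrey_two_point; try (apply two_point_neq0; lra).
  rewrite fadd_two_point, fsub_two_point, !morrey_norm_two_point.
  rewrite (Rmax_abs_l 1 1), (Rmax_abs_l 1 (-1)), (Rmax_abs_l (1 + 1) (1 + -1)),
    (Rmax_abs_r (1 - 1) (1 - -1)) by lra.
  field.
Qed.

Lemma J_set_two_point : J_set d p q 2.
Proof.
  exists (two_point 1 1), (two_point 1 (-1)).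
  rewrite fadd_two_point, fsub_two_point, !morrey_norm_two_point.
  rewrite (Rmax_abs_l 1 1), (Rmax_abs_l 1 (-1)), (Rmax_abs_l (1 + 1) (1 + -1)),
    (Rmax_abs_r (1 - 1) (1 - -1)) by lra.
  repeat split; try apply in_morrey_two_point.
  unfold Rmin; destruct (Rle_dec (1 + 1) (1 - -1)); lra.
Qed.

Lemma DW_set_two_point s : 0 < s < 1 -> DW_set d p q (2 * (2 + s) / (1 + s)).
Proof.
  intro Hs; exists (two_point 1 1), (two_point (1 - s) (1 + s)).
  repeat split; try apply in_morrey_two_point; try (apply two_point_neq0; lra).
  { intro E; apply two_point_inj_l in E; lra. }
  rewrite !morrey_norm_two_point, (Rmax_abs_l 1 1), (Rmax_abs_r (1 - s) (1 + s)) by lra.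
  rewrite !fscal_two_point, !fsub_two_point, !morrey_norm_two_point.
  replace (/ 1 * 1 - / (1 + s) * (1 - s)) with (2 * s / (1 + s)) by (field; lra).
  replace (/ 1 * 1 - / (1 + s) * (1 + s)) with 0 by (field; lra).
  assert (0 < 2 * s / (1 + s)) by (apply Rdiv_lt_0_compat; lra).
  rewrite (Rmax_abs_l (1 - (1 - s)) (1 - (1 + s))), (Rmax_abs_l (2 * s / (1 + s)) 0) by lra.
  field; lra.
Qed.

End TwoPoints.

Lemma four_le_of_approx b : (forall s, 0 < s < 1 -> 2 * (2 + s) / (1 + s) <= b) -> 4 <= b.
Proof.
  intro H; apply Rnot_lt_le; intro Hb.
  set (s := Rmin (1 / 2) ((4 - b) / 4)).
  assert (Hs : 0 < s <= 1 / 2) by (split; [apply Rmin_glb_lt | apply Rmin_l]; lra).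
  assert (Hsb : s <= (4 - b) / 4) by apply Rmin_r.
  specialize (H s ltac:(lra)).
  assert (2 * (2 + s) / (1 + s) - (4 - 2 * s) = 2 * s * s / (1 + s)) by (field; lra).
  assert (0 <= 2 * s * s / (1 + s)) by (apply Rle_mult_inv_pos; nra).
  lra.
Qed.

Theorem theorem2 (d : nat) (p q : R) :
  (1 <= d)%nat -> 1 <= p -> p < q ->
  is_lub (NJ_set d p q) 2 /\ is_lub (J_set d p q) 2 /\ is_lub (DW_set d p q) 4.
Proof.
  intros Hd Hp Hpq; destruct d as [| d']; [lia |].
  destruct (exists_separation_radius p q Hp Hpq) as (L & HL & Hsep).
  split; [| split]; split.
  - intro r; now apply NJ_set_le_2.
  - intros b Hb; now apply Hb, (NJ_set_two_point d' p q L).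
  - intro r; now apply J_set_le_2.
  - intros b Hb; now apply Hb, (J_set_two_point d' p q L).
  - intro r; now apply DW_set_le_4.
  - intros b Hb; apply four_le_of_approx; intros s Hs.
    now apply Hb, (DW_set_two_point d' p q L).
Qed.
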